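(* Let $d,n$ be positive integers and let $\xi_1,\ldots,\xi_n$ be independent Rademacher random variables (uniform on $\{1,-1\}$). Let $\mathbf{u}_1,\ldots,\mathbf{u}_n\in\mathbb{C}^d$ form a tight frame, i.e. $\sum_{i=1}^n\mathbf{u}_i\mathbf{u}_i^*=C\cdot\mathbf{I}$ for some constant $C>0$, and set $\sigma^2=\big\|\sum_{i=1}^n(\mathbf{u}_i\mathbf{u}_i^* )^2\big\|$. Then $$\min_{\varepsilon_1,\ldots,\varepsilon_n\in\{1,-1\}}\Big\|\sum_{i=1}^n\varepsilon_i\mathbf{u}_i\mathbf{u}_i^*\Big\|\le\sqrt{\frac{n}{d}}\cdot\sigma.$$ Moreover, if $\mathbf{u}_1,\ldots,\mathbf{u}_n$ form a unit-norm tight frame, i.e. $\|\mathbf{u}_i\|=1$ for all $i$ and $\sum_{i=1}^n\mathbf{u}_i\mathbf{u}_i^*=\frac{n}{d}\mathbf{I}$, and $d\le n\le 2d-1$, then $$\min_{\varepsilon_1,\ldots,\varepsilon_n\in\{1,-1\}}\Big\|\sum_{i=1}^n\varepsilon_i\mathbf{u}_i\mathbf{u}_i^*\Big\|=\sqrt{\frac{n}{d}}\cdot\sigma.$$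
   Context: $\|\cdot\|$ is the spectral norm. (The left-hand side is the matrix discrepancy $\min_{\varepsilon_i\in\{\pm1\}}\|\sum_i\mathbb{E}[\xi_i]\mathbf{u}_i\mathbf{u}_i^*-\sum_i\varepsilon_i\mathbf{u}_i\mathbf{u}_i^*\|$, with $\mathbb{E}[\xi_i]=0$.) *)

From HB Require Import structures.
From mathcomp Require Import all_boot all_order all_algebra.
From mathcomp Require Import all_classical all_reals.
From mathcomp Require Import complex.
Set Implicit Arguments. Unset Strict Implicit. Unset Printing Implicit Defensive.
Import Order.TTheory GRing.Theory Num.Theory.
Local Open Scope ring_scope.
Local Open Scope classical_set_scope.

Section Defs.
Variable R : realType.

Definition vnorm (d : nat) (v : 'cV[R[i]]_d) : R :=
  Num.sqrt (\sum_(k < d) ComplexField.Normc.normc (v k 0) ^+ 2).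

Definition adjmx (m p : nat) (A : 'M[R[i]]_(m, p)) : 'M[R[i]]_(p, m) :=
  (map_mx (@conjc R) A)^T.

Definition specnorm (d : nat) (A : 'M[R[i]]_d) : R :=
  sup [set vnorm (A *m v) | v in [set v : 'cV[R[i]]_d | vnorm v = 1]].

Definition outer (d : nat) (u : 'cV[R[i]]_d) : 'M[R[i]]_d := u *m adjmx u.

Definition sgn (b : bool) : R[i] := if b then 1 else -1.

Definition signed_norm (d n : nat) (u : 'I_n -> 'cV[R[i]]_d)
  (e : {ffun 'I_n -> bool}) : R :=
  specnorm (\sum_(i < n) sgn (e i) *: outer (u i)).

(* min over all 2^n signings (the seed value is itself one of the values) *)
Definition min_disc (d n : nat) (u : 'I_n -> 'cV[R[i]]_d) : R :=
  \big[Num.min/ signed_norm u [ffun=> true]]_(e : {ffun 'I_n -> bool})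
     signed_norm u e.
End Defs.

(* For the upper bound take the all-plus signing, whose norm is the frame
   constant C.  With a_i = |u_i|^2, the trace of the frame operator gives
   sum a_i = C d, while sum (u_i u_i^* )^2 = sum a_i u_i u_i^* has its diagonal
   entries bounded by sigma^2, so sum a_i^2 <= d sigma^2; Cauchy-Schwarz,
   (sum a_i)^2 <= n sum a_i^2, then gives C <= sqrt(n/d) sigma.
   For a unit-norm tight frame (u_i u_i^* )^2 = u_i u_i^*, so sigma^2 = C = n/d
   and equality holds in the bound.  Conversely, when n <= 2d - 1 one of the two
   sign classes of any signing has fewer than d elements, so some nonzero v is
   orthogonal to all of its vectors; then (sum eps_i u_i u_i^* ) v = +-C v, and
   the signed sum has norm at least C. *)

From HB Require Import structures.
From mathcomp Require Import all_boot all_order all_algebra.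
From mathcomp Require Import all_classical all_reals.
From mathcomp Require Import complex.
From mathcomp Require Import ring lra zify.
Import Order.TTheory GRing.Theory Num.Theory.
Local Open Scope ring_scope.
Local Open Scope complex_scope.
Set Implicit Arguments. Unset Strict Implicit. Unset Printing Implicit Defensive.

Import ComplexField.Normc.

Section ComplexModulus.
Variable R : rcfType.
Implicit Types (x : R) (z : R[i]).

Lemma normc_ge0 z : 0 <= normc z.
Proof. by case: z => a b; exact: sqrtr_ge0. Qed.

Lemma mulcJ_normc z : z * conjc z = (normc z ^+ 2)%:C.
Proof.
case: z => a b /=; rewrite sqr_sqrtr ?addr_ge0 ?sqr_ge0 //.
by apply/eqP; rewrite eq_complex /= -!expr2; apply/andP; split; apply/eqP; ring.
Qed.

Lemma normc_real x : normc x%:C = `|x|.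
Proof. by rewrite /= expr0n addr0 sqrtr_sqr. Qed.

Lemma normc_sum (I : finType) (F : I -> R[i]) :
  normc (\sum_i F i) <= \sum_i normc (F i).
Proof.
elim/big_ind2: _ => [|z1 x1 z2 x2 le1 le2|//]; first by rewrite normc0.
by apply: le_trans (le_normcD _ _) _; exact: lerD.
Qed.

End ComplexModulus.

Lemma sqr_sum_le_card (R : realDomainType) (I : finType) (a : I -> R) :
  (\sum_i a i) ^+ 2 <= #|I|%:R * \sum_i a i ^+ 2.
Proof.
have twice_prod_le i j : a i * a j *+ 2 <= a i ^+ 2 + a j ^+ 2.
  by have := sqr_ge0 (a i - a j); rewrite sqrrB; lra.
rewrite -(ler_pMn2r (n := 2)) // expr2 mulr_suml.
under eq_bigr do rewrite mulr_sumr.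
have <- : \sum_i \sum_j (a i ^+ 2 + a j ^+ 2) = #|I|%:R * (\sum_i a i ^+ 2) *+ 2.
  rewrite mulr2n mulr_natl; under eq_bigr do rewrite big_split /= sumr_const.
  by rewrite big_split /= sumr_const -sumrMnl.
rewrite -sumrMnl; apply: ler_sum => i _; rewrite -sumrMnl; apply: ler_sum => j _.
exact: twice_prod_le.
Qed.

Section Vectors.
Variables (R : realType) (d : nat).
Implicit Types (v : 'cV[R[i]]_d) (z : R[i]).

Lemma vnorm_ge0 v : 0 <= vnorm v.
Proof. exact: sqrtr_ge0. Qed.

Lemma vnorm_sqr v : vnorm v ^+ 2 = \sum_k normc (v k 0) ^+ 2.
Proof. by rewrite sqr_sqrtr // sumr_ge0 // => k _; rewrite sqr_ge0. Qed.

Lemma vnorm0 : vnorm (0 : 'cV[R[i]]_d) = 0.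
Proof.
by rewrite /vnorm big1 ?sqrtr0 // => k _; rewrite mxE normc0 expr0n.
Qed.

Lemma normc_entry_le_vnorm v k : normc (v k 0) <= vnorm v.
Proof.
rewrite -ler_sqr ?nnegrE ?normc_ge0 ?vnorm_ge0 // vnorm_sqr (bigD1 k) //=.
by rewrite lerDl sumr_ge0 // => j _; rewrite sqr_ge0.
Qed.

Lemma vnorm_gt0 v : v != 0 -> 0 < vnorm v.
Proof.
case/cV0Pn => k vk_neq0.
apply: lt_le_trans (normc_entry_le_vnorm v k); rewrite lt_def normc_ge0 andbT.
by apply: contra vk_neq0 => /eqP/eq0_normc ->.
Qed.

Lemma vnormZ z v : vnorm (z *: v) = normc z * vnorm v.
Proof.
rewrite /vnorm.
under eq_bigr => k _ do rewrite mxE normcM exprMn.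
by rewrite -mulr_sumr sqrtrM ?sqr_ge0 // sqrtr_sqr ger0_norm ?normc_ge0.
Qed.

Lemma vnorm_delta k : vnorm (delta_mx k 0 : 'cV[R[i]]_d) = 1.
Proof.
rewrite /vnorm (bigD1 k) //= big1 ?addr0 => [|j /negbTE kj]; rewrite mxE.
  by rewrite !eqxx normc1 expr1n sqrtr1.
by rewrite kj normc0 expr0n.
Qed.

End Vectors.

Section SpectralNorm.
Variables (R : realType) (d : nat).
Implicit Types (A : 'M[R[i]]_d) (v : 'cV[R[i]]_d) (z : R[i]).

Lemma vnorm_mulmx_bounded A :
  has_ubound [set vnorm (A *m v) | v in [set v | vnorm v = 1]]%classic.
Proof.
exists (Num.sqrt (\sum_k (\sum_j normc (A k j)) ^+ 2)) => _ [v v1 <-].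
rewrite ler_sqrt ?sumr_ge0 // => [|k _]; last exact: sqr_ge0.
apply: ler_sum => k _.
rewrite ler_sqr ?nnegrE ?normc_ge0 ?sumr_ge0 // => [|j _]; last exact: normc_ge0.
rewrite mxE; apply: le_trans (normc_sum _) _; apply: ler_sum => j _.
by rewrite normcM ler_piMr ?normc_ge0 // -v1 normc_entry_le_vnorm.
Qed.

Lemma vnorm_mulmx_le_specnorm A v : vnorm v = 1 -> vnorm (A *m v) <= specnorm A.
Proof.
move=> v1; apply: sup_upper_bound; last by exists v.
by split; [exists (vnorm (A *m v)), v | exact: vnorm_mulmx_bounded].
Qed.

Lemma vnorm_mulmx_le A v : vnorm (A *m v) <= specnorm A * vnorm v.
Proof.
have [->|v_neq0] := eqVneq v 0; first by rewrite mulmx0 vnorm0 mulr0.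
have vpos := vnorm_gt0 v_neq0.
have unit_v : vnorm (((vnorm v)^-1)%:C *: v) = 1.
  by rewrite vnormZ normc_real ger0_norm ?invr_ge0 ?(ltW vpos) // mulVf ?gt_eqF.
have := vnorm_mulmx_le_specnorm A unit_v.
rewrite -scalemxAr vnormZ normc_real ger0_norm ?invr_ge0 ?(ltW vpos) //.
by rewrite ler_pdivrMl // mulrC.
Qed.

Lemma normc_eigenvalue_le_specnorm A v z :
  v != 0 -> A *m v = z *: v -> normc z <= specnorm A.
Proof.
move=> v_neq0 Av; have := vnorm_mulmx_le A v.
by rewrite Av vnormZ ler_pM2r // vnorm_gt0.
Qed.

Lemma normc_diag_le_specnorm A k : normc (A k k) <= specnorm A.
Proof.
apply: le_trans _ (vnorm_mulmx_le_specnorm A (vnorm_delta R k)).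
by have := normc_entry_le_vnorm (A *m delta_mx k 0) k; rewrite -colE mxE.
Qed.

Lemma specnorm_scalar_mx (d_gt0 : (0 < d)%N) z :
  specnorm (z%:M : 'M[R[i]]_d) = normc z.
Proof.
pose k := Ordinal d_gt0.
apply/le_anti/andP; split.
  apply: ge_sup => [|_ [v v1 <-]]; last by rewrite mul_scalar_mx vnormZ v1 mulr1.
  by exists (vnorm (z%:M *m delta_mx k 0)), (delta_mx k 0); first exact: vnorm_delta.
by have := normc_diag_le_specnorm z%:M k; rewrite mxE eqxx mulr1n.
Qed.

End SpectralNorm.

Section OuterProducts.
Variables (R : realType) (d : nat).
Implicit Types (u v : 'cV[R[i]]_d).

Lemma adjmx_mul u v : adjmx u *m v = (\sum_k conjc (u k 0) * v k 0)%:M.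
Proof.
by apply/matrixP => i j; rewrite !ord1 !mxE; apply: eq_bigr => k _; rewrite !mxE.
Qed.

Lemma outerE u k j : outer u k j = u k 0 * conjc (u j 0).
Proof. by rewrite !mxE big_ord1 !mxE. Qed.

Lemma outer_sqr u : outer u *m outer u = (vnorm u ^+ 2)%:C *: outer u.
Proof.
rewrite /outer !mulmxA -[u *m adjmx u *m u]mulmxA.
suff -> : adjmx u *m u = ((vnorm u ^+ 2)%:C)%:M by rewrite mul_mx_scalar scalemxAl.
rewrite adjmx_mul vnorm_sqr (rmorph_sum (real_complex R)); congr _%:M.
by apply: eq_bigr => k _; rewrite mulrC mulcJ_normc.
Qed.

Lemma exists_orthogonal (I : finType) (w : I -> 'cV[R[i]]_d) (J : {set I}) :
  (#|J| < d)%N ->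
  exists2 v : 'cV[R[i]]_d, v != 0 & forall i, i \in J -> adjmx (w i) *m v = 0.
Proof.
move=> J_small.
pose B : 'M[R[i]]_(d, #|J|) := \matrix_(k, j) conjc (w (enum_val j) k 0).
have /rowV0Pn[v /sub_kermxP vB0 v_neq0] : kermx B != 0.
  by rewrite -mxrank_eq0 mxrank_ker; have := rank_leq_col B; lia.
exists v^T => [|i iJ]; first by rewrite trmx_eq0.
have inner0 : \sum_k conjc (w i k 0) * v^T k 0 = 0.
  transitivity ((v *m B) 0 (enum_rank_in iJ i)); last by rewrite vB0 mxE.
  rewrite mxE; apply: eq_bigr => k _.
  by rewrite !mxE enum_rankK_in // mulrC.
by rewrite adjmx_mul inner0 raddf0.
Qed.

End OuterProducts.

Section Frames.
Variables (R : realType) (d : nat) (I : finType) (u : I -> 'cV[R[i]]_d).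

Lemma tight_frame_diag c : \sum_i outer (u i) = (c%:C)%:M ->
  forall k, \sum_i normc (u i k 0) ^+ 2 = c.
Proof.
move=> tight k; apply: complexI; rewrite rmorph_sum.
have := congr1 (fun M : 'M[R[i]]_d => M k k) tight.
rewrite /= summxE mxE eqxx mulr1n => <-.
by apply: eq_bigr => i _; rewrite outerE mulcJ_normc.
Qed.

Lemma tight_frame_sum_vnorm_sqr c : \sum_i outer (u i) = (c%:C)%:M ->
  \sum_i vnorm (u i) ^+ 2 = c * d%:R.
Proof.
move=> /tight_frame_diag diag; under eq_bigr do rewrite vnorm_sqr.
rewrite exchange_big /=; under eq_bigr do rewrite diag.
by rewrite sumr_const card_ord mulr_natr.
Qed.

Lemma sum_vnorm_sqr_sqr_le :
  \sum_i (vnorm (u i) ^+ 2) ^+ 2 <=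
  d%:R * specnorm (\sum_i outer (u i) *m outer (u i)).
Proof.
set S := \sum_i (outer _ *m _).
have S_diag k : S k k = (\sum_i vnorm (u i) ^+ 2 * normc (u i k 0) ^+ 2)%:C.
  rewrite summxE rmorph_sum; apply: eq_bigr => i _.
  by rewrite outer_sqr mxE outerE mulcJ_normc -rmorphM.
have -> : \sum_i (vnorm (u i) ^+ 2) ^+ 2 =
          \sum_k \sum_i vnorm (u i) ^+ 2 * normc (u i k 0) ^+ 2.
  rewrite exchange_big; apply: eq_bigr => i _ /=.
  by rewrite -mulr_sumr -vnorm_sqr expr2.
apply: le_trans (_ : _ <= \sum_(k < d) specnorm S) _; last first.
  by rewrite sumr_const card_ord mulr_natl.
apply: ler_sum => k _; apply: le_trans (normc_diag_le_specnorm S k).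
by rewrite S_diag normc_real ler_norm.
Qed.

Lemma tight_frame_constant_le c : (0 < d)%N -> 0 <= c ->
  \sum_i outer (u i) = (c%:C)%:M ->
  c <= Num.sqrt (#|I|%:R / d%:R) *
       Num.sqrt (specnorm (\sum_i outer (u i) *m outer (u i))).
Proof.
move=> d_gt0 c_ge0 tight; set sigma2 := specnorm _.
have d_pos : 0 < d%:R :> R by rewrite ltr0n.
have c_sqr_le : c ^+ 2 <= #|I|%:R / d%:R * sigma2.
  have := sqr_sum_le_card (fun i => vnorm (u i) ^+ 2).
  rewrite (tight_frame_sum_vnorm_sqr tight) => cauchy_schwarz.
  have := sum_vnorm_sqr_sqr_le; rewrite -/sigma2 => sum_sqr_le.
  have := ler0n R #|I|; rewrite mulrAC ler_pdivlMr //; nra.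
have rhs_ge0 := le_trans (sqr_ge0 c) c_sqr_le.
rewrite -sqrtrM ?divr_ge0 ?ler0n // -(ger0_norm c_ge0) -sqrtr_sqr.
by rewrite ler_sqrt.
Qed.

End Frames.

Section Signings.
Variables (R : realType) (d n : nat) (u : 'I_n -> 'cV[R[i]]_d).

Lemma min_disc_le e : min_disc u <= signed_norm u e.
Proof. exact: bigmin_le. Qed.

Lemma le_min_disc c : (forall e, c <= signed_norm u e) -> c <= min_disc u.
Proof. by move=> c_le; apply: le_bigmin. Qed.

Lemma min_disc_le_tight_constant c : (0 < d)%N -> 0 <= c ->
  \sum_i outer (u i) = (c%:C)%:M -> min_disc u <= c.
Proof.
move=> d_gt0 c_ge0 tight; apply: le_trans (min_disc_le [ffun=> true]) _.
have -> : signed_norm u [ffun=> true] = specnorm (\sum_i outer (u i)).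
  by congr specnorm; apply: eq_bigr => i _; rewrite ffunE scale1r.
by rewrite tight specnorm_scalar_mx // normc_real ger0_norm.
Qed.

Lemma normc_sgn b : normc (sgn R b) = 1.
Proof. by case: b; rewrite ?normcN normc1. Qed.

Lemma signing_minority (e : {ffun 'I_n -> bool}) : (0 < d)%N ->
  (n <= 2 * d - 1)%N -> exists b, (#|[set i | e i != b]| < d)%N.
Proof.
move=> d_gt0 n_le.
have card_split : (#|[set i | e i != true]| + #|[set i | e i != false]|)%N = n.
  have -> : [set i | e i != false] = ~: [set i | e i != true].
    by apply/setP => i; rewrite !inE; case: (e i).
  by rewrite cardsC card_ord.
have [|large] := ltnP #|[set i | e i != true]| d; first by exists true.
by exists false; lia.
Qed.

Lemma tight_frame_le_signed_norm c e : (0 < d)%N -> (n <= 2 * d - 1)%N ->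
  \sum_i outer (u i) = (c%:C)%:M -> c <= signed_norm u e.
Proof.
move=> d_gt0 n_le tight.
have [b minority_small] := signing_minority e d_gt0 n_le.
have [v v_neq0 v_orth] := exists_orthogonal u minority_small.
have eigen : (\sum_i sgn R (e i) *: outer (u i)) *m v = (sgn R b * c%:C) *: v.
  rewrite -scalerA -[c%:C *: v]mul_scalar_mx -tight !mulmx_suml scaler_sumr.
  apply: eq_bigr => i _; rewrite -scalemxAl.
  have [-> // | e_neq] := eqVneq (e i) b.
  by rewrite /outer -mulmxA v_orth ?inE // mulmx0 !scaler0.
apply: le_trans (normc_eigenvalue_le_specnorm v_neq0 eigen).
by rewrite normcM normc_sgn normc_real mul1r ler_norm.
Qed.

End Signings.

Theorem theorem1p5 (R : realType) (d n : nat) (hd : (0 < d)%N) (hn : (0 < n)%N)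
  (u : 'I_n -> 'cV[R[i]]_d)
  (tight : exists C : R, 0 < C /\
     \sum_(i < n) outer (u i) = (real_complex R C)%:M) :
  let sigma := Num.sqrt (specnorm (\sum_(i < n) (outer (u i) *m outer (u i)))) in
  min_disc u <= Num.sqrt (n%:R / d%:R) * sigma /\
  ((forall i, vnorm (u i) = 1) ->
   \sum_(i < n) outer (u i) = (real_complex R (n%:R / d%:R))%:M ->
   (d <= n)%N -> (n <= 2 * d - 1)%N ->
   min_disc u = Num.sqrt (n%:R / d%:R) * sigma).
Proof.
move=> sigma; have [C [C_gt0 tightC]] := tight.
split.
  apply: le_trans (min_disc_le_tight_constant hd (ltW C_gt0) tightC) _.
  by have := tight_frame_constant_le hd (ltW C_gt0) tightC; rewrite card_ord.
(* [d <= n] follows from the unit-norm tight-frame identity. *)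
move=> unit_norm tight_nd _ n_le.
have nd_ge0 : 0 <= n%:R / d%:R :> R by rewrite divr_ge0 ?ler0n.
have -> : sigma = Num.sqrt (n%:R / d%:R).
  rewrite /sigma; under eq_bigr do rewrite outer_sqr unit_norm expr1n rmorph1 scale1r.
  by rewrite tight_nd specnorm_scalar_mx // normc_real ger0_norm.
rewrite -expr2 sqr_sqrtr //; apply/le_anti/andP; split.
  exact: min_disc_le_tight_constant.
by apply: le_min_disc => e; apply: tight_frame_le_signed_norm.
Qed.
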